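(* Let $d,k$ be positive integers, let $\mathscr{A}\subseteq\mathbb{R}^d$, $\mathscr{B}\subseteq\mathbb{R}^k$, and let $\boldsymbol{f}:\mathscr{A}\to\mathbb{R}^k$. Let $\mathscr{X}$ be the family of all random vectors $X$ in $\mathbb{R}^d$ such that $\Pr\{X\in\mathscr{A}\}=1$ and $\mathbb{E}[\boldsymbol{f}(X)]\in\mathscr{B}$. Then for any (measurable) subset $\mathscr{C}$ of $\mathscr{A}$, \[ \sup_{X\in\mathscr{X}}\Pr\{X\in\mathscr{C}\}=\max\{P_i:1\le i\le k+1\}, \] where, for $i=1,\dots,k+1$, \[ P_i=\sup\Big\{\sum_{\ell=1}^i\theta_\ell:\ \theta_\ell\ge 0 \text{ for } 1\le\ell\le k+1,\ y_\ell\in\mathscr{C}\text{ for }1\le\ell\le i,\ y_\ell\in\mathscr{A}\setminus\mathscr{C}\text{ for } i<\ell\le k+1,\ \sum_{\ell=1}^{k+1}\theta_\ell=1,\ \sum_{\ell=1}^{k+1}\theta_\ell\boldsymbol{f}(y_\ell)\in\mathscr{B}\Big\}. \]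
   Context: All sets and functions involved are assumed measurable so that the probabilities and expectations make sense. The supremum of an empty set is defined to be $0$. *)

(* R^n is modelled as n.-tuple R, which the library
   equips with the product (= Borel) sigma-algebra (measurable_structure.v). *)
From HB Require Import structures.
From mathcomp Require Import all_boot all_order all_algebra.
From mathcomp Require Import all_classical all_reals all_analysis.
Set Implicit Arguments. Unset Strict Implicit. Unset Printing Implicit Defensive.
Import Order.TTheory GRing.Theory Num.Theory.
Local Open Scope classical_set_scope.
Local Open Scope ring_scope.

Definition expect_vec {dd : measure_display} {Omega : measurableType dd}
  {R : realType} (P : probability Omega R) (D : set Omega) (k : nat)
  (g : Omega -> k.-tuple R) : k.-tuple R :=
  [tuple fine (\int[P]_(w in D) (tnth (g w) j)%:E) | j < k].

(* The values Pr{X in C} for X ranging over the family 𝒳 of all random vectors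
   X (on any probability space) with Pr{X in A} = 1 and E[f(X)] in B
   (E[f(X)] existing, i.e. every component of f(X) integrable). *)
Definition prob_values {R : realType} (d k : nat)
  (A C : set (d.-tuple R)) (B : set (k.-tuple R))
  (f : d.-tuple R -> k.-tuple R) : set R :=
  [set p | exists (dd : measure_display) (Omega : measurableType dd)
             (P : probability Omega R) (X : Omega -> d.-tuple R),
     [/\ measurable_fun setT X,
         P (X @^-1` A) = 1%E,
         (forall j : 'I_k,
            P.-integrable (X @^-1` A) (fun w => (tnth (f (X w)) j)%:E)),
         B (expect_vec P (X @^-1` A) (fun w => f (X w)))
       & p = fine (P (X @^-1` C))]].

(* The set whose supremum is P_i (indices l = 0..k, "l < i" means 1 <= l+1 <= i). *)
Definition Pi_values {R : realType} (d k : nat)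
  (A C : set (d.-tuple R)) (B : set (k.-tuple R))
  (f : d.-tuple R -> k.-tuple R) (i : nat) : set R :=
  [set s | exists (theta : 'I_k.+1 -> R) (y : 'I_k.+1 -> d.-tuple R),
     (forall l, 0 <= theta l) /\
     [/\ 
         forall l : 'I_k.+1, (l < i)%N -> C (y l),
         forall l : 'I_k.+1, (i <= l)%N -> (A `\` C) (y l),
         \sum_(l < k.+1) theta l = 1,
         B [tuple \sum_(l < k.+1) theta l * tnth (f (y l)) j | j < k]
       & s = \sum_(l < k.+1 | (l < i)%N) theta l]].

(* P_i ; note that mathcomp's [sup] of an empty set is 0, as in the paper. *)
Definition Pval {R : realType} (d k : nat)
  (A C : set (d.-tuple R)) (B : set (k.-tuple R))
  (f : d.-tuple R -> k.-tuple R) (i : nat) : R :=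
  sup (Pi_values A C B f i).

From HB Require Import structures.
From mathcomp Require Import all_boot all_order all_algebra.
From mathcomp Require Import all_classical all_reals all_analysis.
From mathcomp Require Import lra ring measurable_realfun.
Import Order.TTheory GRing.Theory Num.Theory.
Local Open Scope classical_set_scope.
Local Open Scope ring_scope.
Set Implicit Arguments. Unset Strict Implicit. Unset Printing Implicit Defensive.

(* For an admissible X, the vector (Pr{X in C}, E f(X)) is the mean of the
   random vector (1_C(X), f(X)), hence a convex combination of finitely many of
   its values: otherwise some closed half-space through the mean contains all
   the values, the corresponding nonnegative affine functional of the values
   has mean zero and thus vanishes almost surely, and on that full-measure set
   one coordinate is a function of the others, which allows induction on the
   dimension.  Caratheodory's reduction keeps at most k+1 of these points
   without changing E f(X) or decreasing the mass on C; listing the points in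
   C first gives a candidate for some P_i.  Conversely, every candidate for P_i
   is Pr{X in C} for the discrete X with atoms y_l of weights theta_l. *)

Section ConvexCone.
Variables (R : realType) (n : nat).
Implicit Types (u v x y : 'I_n -> R) (C : set ('I_n -> R)).

Lemma scalevE t x i : (t *: x) i = t * x i.
Proof. by []. Qed.

Lemma addvE x y i : (x + y) i = x i + y i.
Proof. by []. Qed.

Definition dotv u x := \sum_i u i * x i.

Definition unitv (i0 : 'I_n) : 'I_n -> R := fun i => if i == i0 then 1 else 0.

Lemma scale_unitvE t i0 i : (t *: unitv i0) i = if i == i0 then t else 0.
Proof. by rewrite scalevE /unitv; case: eqP; rewrite ?mulr1 ?mulr0. Qed.

Lemma dotvDl u v x : dotv (u + v) x = dotv u x + dotv v x.
Proof. by rewrite /dotv -big_split; apply: eq_bigr => i _; rewrite addvE mulrDl. Qed.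

Lemma dotvDr u x y : dotv u (x + y) = dotv u x + dotv u y.
Proof. by rewrite /dotv -big_split; apply: eq_bigr => i _; rewrite addvE mulrDr. Qed.

Lemma dotvZr u t x : dotv u (t *: x) = t * dotv u x.
Proof. by rewrite /dotv mulr_sumr; apply: eq_bigr => i _; rewrite scalevE mulrCA. Qed.

Lemma dotv0r u : dotv u 0 = 0.
Proof. by rewrite /dotv big1 // => i _; rewrite mulr0. Qed.

Lemma dotv_sumr (I : Type) (s : seq I) u (F : I -> 'I_n -> R) :
  dotv u (\sum_(i <- s) F i) = \sum_(i <- s) dotv u (F i).
Proof.
elim: s => [|i s IH]; first by rewrite !big_nil dotv0r.
by rewrite !big_cons dotvDr IH.
Qed.

Lemma dotv_unitv i0 t x : dotv (t *: unitv i0) x = t * x i0.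
Proof.
rewrite /dotv (bigD1 i0) //= big1 => [|i /negbTE i0i]; last first.
  by rewrite scale_unitvE i0i mul0r.
by rewrite scale_unitvE eqxx addr0.
Qed.

Lemma dotv_single u x i0 : (forall i, i != i0 -> x i = 0) ->
  dotv u x = u i0 * x i0.
Proof.
move=> x0; rewrite /dotv (bigD1 i0) //= big1 ?addr0 // => i /x0 ->.
by rewrite mulr0.
Qed.

Definition convex_cone C :=
  (forall x y, C x -> C y -> C (x + y)) /\
  (forall t x, 0 < t -> C x -> C (t *: x)).

Lemma exists_between (S T : set R) : S !=set0 -> T !=set0 ->
  (forall a b, S a -> T b -> a <= b) -> exists c, ubound S c /\ lbound T c.
Proof.
move=> S0 [b Tb] ST; exists (sup S); split.
  by apply: sup_upper_bound; split => //; exists b => a /ST; apply.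
by move=> b' Tb'; apply: ge_sup => // a /ST; apply.
Qed.

Lemma dotv_unitv_extend_ge0 C u i0 c :
  (forall x, C x -> x i0 = 0 -> 0 <= dotv u x) ->
  (forall x, C x -> 0 < x i0 -> - (dotv u x / x i0) <= c) ->
  (forall x, C x -> x i0 < 0 -> c <= dotv u x / - x i0) ->
  forall x, C x -> 0 <= dotv (u + c *: unitv i0) x.
Proof.
move=> u0 uS uT x Cx; rewrite dotvDl dotv_unitv.
have [x0|x0|x0] := ltgtP (x i0) 0.
- by have := uT _ Cx x0; rewrite ler_pdivlMr ?oppr_gt0 //; lra.
- by have := uS _ Cx x0; rewrite lerNl ler_pdivlMr //; lra.
- by rewrite x0 mulr0 addr0; apply: u0.
Qed.

(* Induction on the coordinates [s] witnessing [x != 0] on [C]: the induction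
   hypothesis applies to the slice [x i0 = 0], and the coefficient of [x i0] is
   squeezed between the constraints coming from [x i0 > 0] and [x i0 < 0],
   which are compatible because the slice contains positive combinations of a
   point of each kind. *)
Lemma convex_cone_halfspace_on (s : seq 'I_n) C w :
  uniq s -> convex_cone C -> C w ->
  (forall x, C x -> has (fun i => x i != 0) s) ->
  exists2 u, has (fun i => u i != 0) s & forall x, C x -> 0 <= dotv u x.
Proof.
elim: s C w => [|i0 s IH] C w; first by move=> _ _ /[swap] /[apply].
move=> /= /andP[i0s us] [Cadd Cscale] Cw Cnz.
have [[a [Ca a0]]|noPos] := pselect (exists a, C a /\ 0 < a i0); last first.
  exists ((-1) *: unitv i0); first by rewrite /= scale_unitvE eqxx oppr_eq0 oner_eq0.
  move=> x Cx; rewrite dotv_unitv mulN1r oppr_ge0 leNgt; apply/negP => xi0.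
  by apply: noPos; exists x.
have [[b [Cb b0]]|noNeg] := pselect (exists b, C b /\ b i0 < 0); last first.
  exists (1 *: unitv i0); first by rewrite /= scale_unitvE eqxx oner_eq0.
  move=> x Cx; rewrite dotv_unitv mul1r leNgt; apply/negP => xi0.
  by apply: noNeg; exists x.
pose C0 := C `&` [set x | x i0 = 0].
have C0_mix x y : C x -> 0 < x i0 -> C y -> y i0 < 0 ->
    C0 ((- y i0) *: x + x i0 *: y).
  move=> Cx x0 Cy y0; split; last by rewrite /= addvE !scalevE mulNr mulrC addNr.
  by apply: Cadd; apply: Cscale; rewrite // oppr_gt0.
have C0cone : convex_cone C0.
  split=> [x y [Cx x0] [Cy y0]|t x t0 [Cx x0]]; split => //=.
  - exact: Cadd.
  - by rewrite addvE x0 y0 addr0.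
  - exact: Cscale.
  - by rewrite scalevE x0 mulr0.
have C0nz x : C0 x -> has (fun i => x i != 0) s.
  by case=> /Cnz /orP[/negP|] // /[swap] ->; rewrite eqxx.
have [u' u'nz u'C0] := IH C0 _ us C0cone (C0_mix _ _ Ca a0 Cb b0) C0nz.
have mixed x y : C x -> 0 < x i0 -> C y -> y i0 < 0 ->
    - (dotv u' x / x i0) <= dotv u' y / - y i0.
  move=> Cx x0 Cy y0; rewrite -subr_ge0 opprK.
  have := u'C0 _ (C0_mix _ _ Cx x0 Cy y0); rewrite dotvDr !dotvZr => h.
  have -> : dotv u' y / - y i0 + dotv u' x / x i0 =
      (- y i0 * dotv u' x + x i0 * dotv u' y) / (x i0 * - y i0).
    by field; rewrite (ltr0_neq0 y0) (gt_eqF x0).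
  by rewrite divr_ge0 // mulr_ge0 // ltW // oppr_gt0.
pose S := [set - (dotv u' x / x i0) | x in [set x | C x /\ 0 < x i0]].
pose T := [set dotv u' y / - y i0 | y in [set y | C y /\ y i0 < 0]].
have [c [cS cT]] : exists c, ubound S c /\ lbound T c.
  apply: exists_between; [by exists (- (dotv u' a / a i0)), a|
                          by exists (dotv u' b / - b i0), b|].
  by move=> _ _ [x [Cx x0] <-] [y [Cy y0] <-]; apply: mixed.
exists (u' + c *: unitv i0).
  case/hasP: u'nz => i si u'i; apply/orP; right; apply/hasP; exists i => //.
  have ii0 : i != i0 by apply: contraNneq i0s => <-.
  by rewrite addvE scale_unitvE (negbTE ii0) addr0.
apply: dotv_unitv_extend_ge0 => [x Cx x0|x Cx x0|x Cx x0].
- exact: u'C0.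
- exact: cS (imageP _ (conj Cx x0)).
- exact: cT (imageP _ (conj Cx x0)).
Qed.

Lemma convex_cone_halfspace C w : convex_cone C -> C w -> ~ C 0 ->
  exists2 u, (exists i, u i != 0) & forall x, C x -> 0 <= dotv u x.
Proof.
move=> Ccone Cw C0; have [|u /hasP[i _ ui] uC] :=
  convex_cone_halfspace_on (enum_uniq 'I_n) Ccone Cw; last by exists u; [exists i|].
move=> x Cx; apply/negPn/negP => /hasPn x0; apply: C0.
suff -> : 0 = x by [].
by apply/funext => i; apply/esym/eqP/negPn/x0; rewrite mem_enum.
Qed.

End ConvexCone.

Lemma eq_lift_dotv (R : realType) n (u x y : 'I_n.+1 -> R) i0 : u i0 != 0 ->
  (forall j, x (lift i0 j) = y (lift i0 j)) -> dotv u (x - y) = 0 -> x = y.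
Proof.
move=> ui0 xy; have off i : i != i0 -> (x - y) i = 0.
  by rewrite eq_sym => /unlift_some[j -> _]; rewrite addvE xy subrr.
rewrite (dotv_single _ off) => /eqP; rewrite mulf_eq0 (negbTE ui0) /= addvE subr_eq0.
by move=> /eqP xyi0; apply/funext => i; case: (unliftP i0 i) => [j|] ->.
Qed.

Lemma left_kernel_neq0 (F : fieldType) r m (M : 'M[F]_(r, m)) : (m < r)%N ->
  exists2 mu : 'rV_r, mu != 0 & mu *m M = 0.
Proof.
move=> mr; have : kermx M != 0.
  by rewrite -mxrank_eq0 mxrank_ker subn_eq0 -ltnNge (leq_ltn_trans (rank_leq_col M)).
by case/rowV0Pn => mu /sub_kermxP muM mu0; exists mu.
Qed.

Lemma exists_neg_of_sum_eq0 (R : realDomainType) (I : finType) (mu : I -> R) :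
  \sum_l mu l = 0 -> (exists l, mu l != 0) -> exists l, mu l < 0.
Proof.
move=> mu0 [l mul]; apply: contrapT => /forallNP mu_ge0; move/eqP: mul; apply.
by apply: (psumr_eq0P _ mu0) => // i _; rewrite leNgt; apply/negP/mu_ge0.
Qed.

Lemma ratio_test (R : realFieldType) r (W mu : 'I_r -> R) :
  (forall l, 0 <= W l) -> (exists l, mu l < 0) ->
  exists t l0, [/\ 0 <= t, forall l, 0 <= W l + t * mu l & W l0 + t * mu l0 = 0].
Proof.
move=> W0 [l1 mul1].
case: (@arg_minP _ R _ l1 (fun l => mu l < 0) (fun l => W l / - mu l) mul1).
move=> l0 mul0 tmin; have mul0N : 0 < - mu l0 by rewrite oppr_gt0.
exists (W l0 / - mu l0), l0; split.
- by rewrite divr_ge0 // ltW.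
- move=> l; have [mul|mul] := ltrP (mu l) 0; last first.
    by rewrite addr_ge0 // mulr_ge0 // divr_ge0 // ltW.
  by have := tmin _ mul; rewrite ler_pdivlMr ?oppr_gt0 // mulrN; lra.
- by field; rewrite ?oppr_eq0 ltr0_neq0.
Qed.

Section Caratheodory.
Variables (R : realType) (T : eqType) (k : nat).
Variables (v : T -> 'I_k -> R) (c : T -> R).

Lemma affine_dependence r (Y : 'I_r -> T) : (k.+1 < r)%N ->
  exists mu : 'I_r -> R, [/\ exists l, mu l < 0, \sum_l mu l = 0,
     forall j, \sum_l mu l * v (Y l) j = 0 & 0 <= \sum_l mu l * c (Y l)].
Proof.
move=> kr.
pose M := \matrix_(l < r, i < k.+1) if unlift ord0 i is Some j then v (Y l) j else 1.
have [mu0 /rV0Pn[l1 mul1] muM] := left_kernel_neq0 M kr.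
have mu0M i : \sum_l mu0 0 l * M l i = 0.
  by have := congr1 (fun A : 'M[R]_(1, k.+1) => A 0 i) muM; rewrite !mxE.
pose sg : R := if 0 <= \sum_l mu0 0 l * c (Y l) then 1 else -1.
have sumZ F : \sum_l sg * mu0 0 l * F l = sg * \sum_l mu0 0 l * F l.
  by rewrite mulr_sumr; apply: eq_bigr => l _; rewrite mulrA.
have sg_sum1 : \sum_l sg * mu0 0 l = 0.
  transitivity (sg * \sum_l mu0 0 l * M l ord0); last by rewrite mu0M mulr0.
  by rewrite mulr_sumr; apply: eq_bigr => l _; rewrite mxE unlift_none mulr1.
exists (fun l => sg * mu0 0 l); split => //.
- apply: exists_neg_of_sum_eq0 sg_sum1 _; exists l1.
  by rewrite mulf_neq0 // /sg; case: ifP; rewrite ?oppr_eq0 oner_eq0.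
- move=> j; rewrite sumZ (_ : \sum_l _ = \sum_l mu0 0 l * M l (lift ord0 j)).
    by rewrite mu0M mulr0.
  by apply: eq_bigr => l _; rewrite mxE liftK.
- by rewrite sumZ /sg; case: ifPn => [|/negP]; rewrite ?mul1r // mulN1r; lra.
Qed.

Lemma drop_one_point (s : seq (R * T)) :
  (k.+1 < size s)%N -> {in s, forall x, 0 <= x.1} ->
  exists s', [/\ {in s', forall x, 0 <= x.1 /\ x.2 \in map snd s},
    (size s' < size s)%N, \sum_(x <- s') x.1 = \sum_(x <- s) x.1,
    forall j, \sum_(x <- s') x.1 * v x.2 j = \sum_(x <- s) x.1 * v x.2 j
  & \sum_(x <- s) x.1 * c x.2 <= \sum_(x <- s') x.1 * c x.2].
Proof.
case: s => [//|x0 s1] ks s0; set s := x0 :: s1 in ks s0 *.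
pose W (l : 'I_(size s)) := (nth x0 s l).1.
pose Y (l : 'I_(size s)) := (nth x0 s l).2.
have sumE (F : R * T -> R) : \sum_(x <- s) F x = \sum_l F (W l, Y l).
  rewrite (big_nth x0) big_mkord.
  by apply: eq_bigr => l _; rewrite -surjective_pairing.
have [mu [mu_neg mu1 muv muc]] := affine_dependence Y ks.
have [t [l0 [t0 W'0 W'l0]]] :=
  ratio_test (fun l => s0 _ (mem_nth x0 (ltn_ord l))) mu_neg.
pose s' : seq (R * T) := [seq (W l + t * mu l, Y l) | l <- enum 'I_(size s)].
have s'l0 : (0, Y l0) \in s' by rewrite -W'l0; apply: map_f; rewrite mem_enum.
have sum_rem (F : R * T -> R) : F (0, Y l0) = 0 ->
    \sum_(x <- rem (0, Y l0) s') F x = \sum_l F (W l + t * mu l, Y l).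
  move=> F0; have <- : \sum_(x <- s') F x = \sum_l F (W l + t * mu l, Y l).
    by rewrite big_map enumT.
  by rewrite (big_rem _ s'l0) /= F0 add0r.
have sumW' G : \sum_l (W l + t * mu l) * G (Y l) =
    \sum_l W l * G (Y l) + t * \sum_l mu l * G (Y l).
  by rewrite mulr_sumr -big_split; apply: eq_bigr => l _ /=; rewrite mulrDl mulrA.
exists (rem (0, Y l0) s'); split.
- move=> _ /mem_rem /mapP[l _ ->].
  by split; [exact: W'0 | exact: (map_f snd (mem_nth x0 (ltn_ord l)))].
- by rewrite size_rem // size_map size_enum_ord.
- by rewrite sum_rem // sumE big_split /= -mulr_sumr mu1 mulr0 addr0.
- by move=> j; rewrite sum_rem /= ?mul0r // sumE (sumW' (v^~ j)) muv mulr0 addr0.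
- by rewrite sum_rem /= ?mul0r // sumE (sumW' c) lerDl mulr_ge0.
Qed.

Lemma caratheodory_reduction (s : seq (R * T)) : {in s, forall x, 0 <= x.1} ->
  exists s', [/\ {in s', forall x, 0 <= x.1 /\ x.2 \in map snd s},
    (size s' <= k.+1)%N, \sum_(x <- s') x.1 = \sum_(x <- s) x.1,
    forall j, \sum_(x <- s') x.1 * v x.2 j = \sum_(x <- s) x.1 * v x.2 j
  & \sum_(x <- s) x.1 * c x.2 <= \sum_(x <- s') x.1 * c x.2].
Proof.
have [N sN] := ubnP (size s); elim: N s sN => // N IH s sN s0.
have [small|big] := leqP (size s) k.+1.
  by exists s; split => // x xs; split; [exact: s0 | exact: map_f].
have [s1 [s10 s1s s1sum s1v s1c]] := drop_one_point big s0.
have [|s' [s'0 s'k s'sum s'v s'c]] := IH s1 _ (fun x xs => (s10 x xs).1).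
  exact: leq_trans s1s sN.
exists s'; split => //.
- by move=> x /s'0[x0 /mapP[y /s10[_ ys] ->]].
- by rewrite s'sum s1sum.
- by move=> j; rewrite s'v s1v.
- exact: le_trans s1c s'c.
Qed.

End Caratheodory.

Section PositiveCombinations.
Variables (R : realType) (T : eqType) (n : nat) (D : set T).

Definition poscomb (h : T -> 'I_n -> R) : set ('I_n -> R) :=
  [set v | exists s : seq (R * T), [/\ {in s, forall x, 0 <= x.1 /\ D x.2},
     0 < \sum_(x <- s) x.1 & v = \sum_(x <- s) x.1 *: h x.2]].

Lemma poscomb_point h w : D w -> poscomb h (h w).
Proof.
exists [:: (1, w)]; rewrite !big_seq1 scale1r; split => // x.
by rewrite inE => /eqP ->.
Qed.

Lemma convex_cone_poscomb h : convex_cone (poscomb h).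
Proof.
split=> [_ _ [s1 [s10 s1p ->]] [s2 [s20 s2p ->]]|t _ t0 [s [s0 sp ->]]].
  exists (s1 ++ s2); rewrite !big_cat /=; split => //; last exact: addr_gt0.
  by move=> x; rewrite mem_cat => /orP[/s10|/s20].
exists [seq (t * x.1, x.2) | x <- s]; rewrite !big_map /=; split.
- by move=> _ /mapP[x /s0[x0 Dx] ->]; split => //; rewrite mulr_ge0 // ltW.
- by rewrite -mulr_sumr mulr_gt0.
- by rewrite scaler_sumr; apply: eq_bigr => x _; rewrite scalerA.
Qed.

Lemma convex_combination_of_poscomb0 (g : T -> 'I_n -> R) m :
  poscomb (fun w => g w - m) 0 ->
  exists s : seq (R * T), [/\ {in s, forall x, 0 <= x.1 /\ D x.2},
    \sum_(x <- s) x.1 = 1 & \sum_(x <- s) x.1 *: g x.2 = m].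
Proof.
case=> s [s0 sp s_eq]; set W := \sum_(x <- s) x.1 in sp s_eq.
have sum_gm : \sum_(x <- s) x.1 *: g x.2 = W *: m.
  apply/eqP; rewrite -subr_eq0; apply/eqP; rewrite [RHS]s_eq /W scaler_suml -sumrB.
  by apply: eq_bigr => x _; rewrite scalerBr.
exists [seq (x.1 / W, x.2) | x <- s]; rewrite !big_map /=; split.
- by move=> _ /mapP[x /s0[x0 Dx] ->]; split => //; rewrite divr_ge0 // ltW.
- by rewrite -mulr_suml mulfV // gt_eqF.
- rewrite (eq_bigr (fun x => W^-1 *: (x.1 *: g x.2))) => [|x _]; last first.
    by rewrite scalerA mulrC.
  by rewrite -scaler_sumr sum_gm scalerA mulVf ?scale1r // gt_eqF.
Qed.

End PositiveCombinations.

Lemma ge0_integral_eq0_null (R : realType) dd (T : measurableType dd)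
    (mu : {measure set T -> \bar R}) (D : set T) (h : T -> R) :
  measurable D -> measurable_fun D h -> (forall w, D w -> 0 <= h w) ->
  (\int[mu]_(w in D) (h w)%:E = 0)%E ->
  exists N, [/\ measurable N, mu N = 0%E & forall w, (D `\` N) w -> h w = 0].
Proof.
move=> mD mh h0 ih.
have mh' : measurable_fun D (fun w => (h w)%:E) by apply/measurable_EFinP.
have [N [mN muN hN]] : ae_eq mu (V := fun=> \bar R) D (fun w => (h w)%:E) (cst 0%E).
  apply/(ae_eq_integral_abs mu mD mh'); rewrite -ih.
  by apply: eq_integral => w /[!inE] Dw; rewrite gee0_abs // lee_fin h0.
exists N; split => // w [Dw Nw]; apply: contrapT => hw; apply: Nw; apply: hN.
by move=> /(_ Dw) [].
Qed.

Section MeanConvexCombination.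
Variables (R : realType) (dd : measure_display) (Om : measurableType dd).
Variable P : probability Om R.

Definition meanv n (D : set Om) (g : Om -> 'I_n -> R) : 'I_n -> R :=
  fun j => \int[P]_(w in D) g w j.

Lemma prob1_nonempty (D : set Om) : P D = 1%E -> D !=set0.
Proof.
move=> PD; apply/set0P/negP => /eqP D0; move: PD.
by rewrite D0 measure0 => -[] /eqP; rewrite eq_sym oner_eq0.
Qed.

Lemma probD_null (D N : set Om) : measurable D -> measurable N ->
  P D = 1%E -> P N = 0%E -> P (D `\` N) = 1%E.
Proof.
move=> mD mN PD PN; rewrite -PD [in RHS](measureDI P mD mN).
by rewrite (@subset_measure0 _ _ _ P (D `&` N) N) ?adde0 //; exact: measurableI.
Qed.

Lemma meanv_setD_null n (D N : set Om) (g : Om -> 'I_n -> R) :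
  measurable D -> measurable N -> P N = 0%E ->
  (forall j, P.-integrable D (EFin \o g^~ j)) -> meanv (D `\` N) g = meanv D g.
Proof.
move=> mD mN PN gi; apply/funext => j.
by rewrite /meanv /Rintegral -negligible_integral //; exact: gi.
Qed.

Lemma meanv_centered n (D : set Om) (g : Om -> 'I_n -> R) :
  measurable D -> P D = 1%E -> (forall j, P.-integrable D (EFin \o g^~ j)) ->
  meanv D (fun w => g w - meanv D g) = 0.
Proof.
move=> mD PD gi; apply/funext => j; rewrite /meanv /= RintegralB //.
  by rewrite Rintegral_cst //= PD mulr1 subrr.
exact: finite_measure_integrable_cst.
Qed.

Lemma integral_dotv n (D : set Om) (g : Om -> 'I_n -> R) u :
  measurable D -> (forall j, P.-integrable D (EFin \o g^~ j)) ->
  (\int[P]_(w in D) (dotv u (g w))%:E = (dotv u (meanv D g))%:E)%E.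
Proof.
move=> mD gi; rewrite /dotv -sumEFin.
rewrite (eq_integral (fun w => \sum_j (u j)%:E * (g w j)%:E)%E); last first.
  by move=> w _; rewrite -sumEFin; apply: eq_bigr => j _; rewrite EFinM.
rewrite integral_sum //; last by move=> j; apply: integrableZl => //; exact: gi.
apply: eq_bigr => j _; rewrite integralZl //; last exact: gi.
by rewrite EFinM /meanv /Rintegral fineK //; exact: integrable_fin_num (gi j).
Qed.

Lemma mean_convex_combination n (D : set Om) (g : Om -> 'I_n -> R) :
  measurable D -> P D = 1%E -> (forall j, P.-integrable D (EFin \o g^~ j)) ->
  exists s : seq (R * Om), [/\ {in s, forall x, 0 <= x.1 /\ D x.2},
    \sum_(x <- s) x.1 = 1 & \sum_(x <- s) x.1 *: g x.2 = meanv D g].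
Proof.
elim: n D g => [|n IH] D g mD PD gi; have [w Dw] := prob1_nonempty PD.
  exists [:: (1, w)]; rewrite !big_seq1; split => //; last by apply/funext => -[].
  by move=> x; rewrite inE => /eqP ->.
set m := meanv D g.
have [/convex_combination_of_poscomb0 //|C0] :=
  pselect (poscomb D (fun w => g w - m) 0).
have [u [i0 ui0] uC] :=
  convex_cone_halfspace (convex_cone_poscomb _ _) (poscomb_point _ Dw) C0.
have gci j : P.-integrable D (EFin \o (fun w => (g w - m) j)).
  apply: (eq_integrable mD _ _ _
    (integrableB mD (gi j) (finite_measure_integrable_cst P (m j) mD))).
  by move=> x _; rewrite /= EFinB.
have mh : measurable_fun D (fun w => dotv u (g w - m)).
  apply: measurable_sum => j; apply: measurable_funM; first exact: measurable_cst.
  by apply/measurable_EFinP; exact: measurable_int (gci j).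
have ih : (\int[P]_(w in D) (dotv u (g w - m))%:E = 0)%E.
  by rewrite integral_dotv // meanv_centered // dotv0r.
have [N [mN PN hN]] :=
  ge0_integral_eq0_null mD mh (fun w Dw => uC _ (poscomb_point _ Dw)) ih.
have [s [s0 s1 sg]] := IH (D `\` N) (fun w j => g w (lift i0 j))
  (measurableD mD mN) (probD_null mD mN PD PN)
  (fun j => integrableS mD (measurableD mD mN) (@subDsetl _ _ _) (gi _)).
rewrite (meanv_setD_null mD mN PN (fun j => gi (lift i0 j))) in sg.
exists s; split => //; first by move=> x /s0[? []].
apply: (eq_lift_dotv ui0) => [j|].
  by move: (congr1 (fun v => v j) sg); rewrite !fct_sumE.
have -> : \sum_(x <- s) x.1 *: g x.2 - m = \sum_(x <- s) x.1 *: (g x.2 - m).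
  rewrite -[X in _ - X = _]scale1r -s1 scaler_suml -sumrB.
  by apply: eq_bigr => x _; rewrite scalerBr.
rewrite dotv_sumr big_seq big1 // => x /s0[_ Dx].
by rewrite dotvZr hN ?mulr0.
Qed.

End MeanConvexCombination.

Section DiscreteProbability.
Variables (R : realType) (dd : measure_display) (T : measurableType dd) (n : nat).
Variables (th : 'I_n.+1 -> R) (y : 'I_n.+1 -> T).
Hypotheses (th0 : forall l, 0 <= th l) (th1 : \sum_l th l = 1).

(* [msum] sums a [nat]-indexed family of measures, hence the [inord]. *)
Definition discrete_measure : set T -> \bar R :=
  msum (fun l => mscale (NngNum (th0 (inord l))) \d_(y (inord l))) n.+1.

HB.instance Definition _ := Measure.on discrete_measure.

Let discrete_measureE U :
  discrete_measure U = (\sum_l th l * (y l \in U)%:R)%:E.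
Proof.
rewrite /discrete_measure /msum /= -sumEFin; apply: eq_bigr => l _.
by rewrite /mscale /= diracE inord_val EFinM.
Qed.

Let discrete_measureT : discrete_measure setT = 1%E.
Proof.
by rewrite discrete_measureE (eq_bigr th) ?th1 // => l _; rewrite in_setT mulr1.
Qed.

Definition discrete_prob : probability T R :=
  HB.pack_for (probability T R) discrete_measure
    (Measure_isProbability.Build _ _ _ discrete_measure discrete_measureT).

Lemma discrete_probE U : discrete_prob U = (\sum_l th l * (y l \in U)%:R)%:E.
Proof. exact: discrete_measureE. Qed.

Variable D : set T.
Hypotheses (mD : measurable D) (Dy : forall l, D (y l)).

Lemma ge0_integral_discrete (h : T -> R) : measurable_fun D h ->
  (forall x, D x -> 0 <= h x) ->
  (\int[discrete_prob]_(x in D) (h x)%:E = (\sum_l th l * h (y l))%:E)%E.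
Proof.
move=> mh h0.
have h0' x : D x -> (0 <= (h x)%:E)%E by move=> Dx; rewrite lee_fin h0.
have mh' : measurable_fun D (fun x => (h x)%:E) by apply/measurable_EFinP.
rewrite ge0_integral_measure_sum // -sumEFin; apply: eq_bigr => l _.
rewrite ge0_integral_mscale // integral_dirac // diracE mem_set ?inord_val //.
by rewrite mul1e EFinM.
Qed.

Lemma integral_discrete (h : T -> R) : measurable_fun D h ->
  (\int[discrete_prob]_(x in D) (h x)%:E = (\sum_l th l * h (y l))%:E)%E.
Proof.
move=> mh; rewrite integralE -/(EFin \o h) funerpos funerneg.
rewrite !ge0_integral_discrete //; last 2 first.
- exact: measurable_funrneg.
- exact: measurable_funrpos.
rewrite -EFinB -sumrB; congr EFin; apply: eq_bigr => l _.
by rewrite -mulrBr -[in RHS](funrposBneg h).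
Qed.

Lemma integrable_discrete (h : T -> R) : measurable_fun D h ->
  discrete_prob.-integrable D (EFin \o h).
Proof.
move=> mh; apply/integrableP; split; first exact/measurable_EFinP.
rewrite (eq_integral (fun x => (`|h x|)%:E)) // ge0_integral_discrete ?ltry //.
exact: measurableT_comp.
Qed.

End DiscreteProbability.

Section SupremumBounds.
Variable R : realType.
Implicit Types E F : set R.

Lemma has_ubound01 E : (forall x, E x -> 0 <= x <= 1) -> has_ubound E.
Proof. by move=> E01; exists 1 => x /E01 /andP[]. Qed.

Lemma sup_ge0 E : has_ubound E -> (forall x, E x -> 0 <= x) -> 0 <= sup E.
Proof.
move=> ubE E0; case: (eqVneq E set0) => [->|/set0P[x Ex]]; first by rewrite sup0.
exact: le_trans (E0 _ Ex) (sup_upper_bound (conj (ex_intro _ x Ex) ubE) Ex).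
Qed.

Lemma le_sup_ge0 E F : E `<=` F -> has_ubound F -> (forall x, F x -> 0 <= x) ->
  sup E <= sup F.
Proof.
move=> EF ubF F0; case: (eqVneq E set0) => [->|/set0P[x Ex]].
  by rewrite sup0 sup_ge0.
apply: sup_le; [by move=> y /EF; exact: le_down | by exists x | ].
by split => //; exists x; exact: EF.
Qed.

End SupremumBounds.

Section SupremumAsMaximum.
Variables (R : realType) (d k : nat).
Variables (A C : set (d.-tuple R)) (B : set (k.-tuple R)).
Variable f : d.-tuple R -> k.-tuple R.
Hypotheses (mA : measurable A) (mf : measurable_fun A f).
Hypotheses (mC : measurable C) (CA : C `<=` A).

Local Notation Pmax := (\big[Num.max/0]_(i < k.+1) Pval A C B f i.+1).

Lemma prob_values_in01 p : prob_values A C B f p -> 0 <= p <= 1.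
Proof.
move=> [dd [Om [P [X [mX _ _ _ ->]]]]].
have mXC : measurable (X @^-1` C) by rewrite -[X @^-1` C]setTI; exact: mX.
have PXC1 := probability_le1 P mXC.
have PXCfin : P (X @^-1` C) \is a fin_num.
  by rewrite ge0_fin_numE // (le_lt_trans PXC1) ?ltry.
by rewrite fine_ge0 //= -lee_fin fineK.
Qed.

Lemma Pi_values_in01 i s : Pi_values A C B f i s -> 0 <= s <= 1.
Proof.
move=> [th [y [th0 [_ _ th1 _ ->]]]]; rewrite sumr_ge0 //= -th1.
by rewrite [leRHS](bigID (fun l : 'I_k.+1 => (l < i)%N)) /= lerDl sumr_ge0.
Qed.

Lemma Pmax_ge0 : 0 <= Pmax.
Proof.
apply: le_trans (le_bigmax _ (fun i : 'I_k.+1 => Pval A C B f i.+1) ord0).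
apply: sup_ge0; first exact/has_ubound01/Pi_values_in01.
by move=> s /Pi_values_in01 /andP[].
Qed.

Lemma le_Pmax i s : (0 < i <= k.+1)%N -> Pi_values A C B f i s -> s <= Pmax.
Proof.
case: i => // i /= ik Ps; apply: le_trans (le_bigmax _ _ (Ordinal ik)).
apply: sup_upper_bound => //; split; first by exists s.
exact/has_ubound01/Pi_values_in01.
Qed.

Lemma Pi_values_sub_prob_values i : Pi_values A C B f i `<=` prob_values A C B f.
Proof.
move=> _ [th [y [th0 [yC yAC th1 thB ->]]]].
have yA l : A (y l) by case: (ltnP l i) => [/yC/CA|/yAC[]].
have mfj j : measurable_fun A (fun x => tnth (f x) j).
  exact: measurableT_comp (measurable_tnth j) mf.
exists _, _, (discrete_prob y th0 th1), id; split.
- exact: measurable_id.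
- by rewrite discrete_probE (eq_bigr th) ?th1 // => l _; rewrite mem_set ?mulr1.
- by move=> j; exact: integrable_discrete.
- by move: thB; congr B; apply: eq_mktuple => j; rewrite integral_discrete.
- rewrite discrete_probE /= big_mkcond; apply: eq_bigr => l _.
  case: ifPn => [/yC Cy|]; first by rewrite mem_set ?mulr1.
  by rewrite -leqNgt => /yAC[_ nCy]; rewrite memNset ?mulr0.
Qed.

Lemma Pi_values_of_seq (t : seq (R * d.-tuple R)) i :
  size t = k.+1 -> (i <= k.+1)%N -> {in t, forall x, 0 <= x.1} ->
  {in take i t, forall x, C x.2} -> {in drop i t, forall x, (A `\` C) x.2} ->
  \sum_(x <- t) x.1 = 1 -> B [tuple \sum_(x <- t) x.1 * tnth (f x.2) j | j < k] ->
  Pi_values A C B f i (\sum_(x <- take i t) x.1).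
Proof.
move=> tk ik t0 tC tAC t1 tB.
pose x0 : R * d.-tuple R := (0, [tuple 0 | _ < d]).
have sumt F : \sum_(x <- t) F x = \sum_(l < k.+1) F (nth x0 t l).
  by rewrite (big_nth x0) tk big_mkord.
exists (fun l => (nth x0 t l).1), (fun l => (nth x0 t l).2); split.
  by move=> l; apply: t0; rewrite mem_nth // tk.
split.
- move=> l li; apply: tC; rewrite -(nth_take _ li).
  by apply: mem_nth; rewrite size_takel // tk.
- move=> l il; apply: tAC; rewrite -[nat_of_ord l](subnKC il) -nth_drop.
  by apply: mem_nth; rewrite size_drop tk ltn_sub2r // (leq_ltn_trans il).
- by rewrite -t1 sumt.
- by move: tB; congr B; apply: eq_mktuple => j; rewrite sumt.
- rewrite (big_nth x0) size_takel ?tk // big_mkord.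
  rewrite (eq_bigr (fun l : 'I_i => (nth x0 t l).1)) => [|l _]; last first.
    by rewrite nth_take.
  exact: (big_ord_widen k.+1 (fun l => (nth x0 t l).1)).
Qed.

Definition pad_weighted (t : seq (R * d.-tuple R)) z :=
  t ++ nseq (k.+1 - size t) (0, z).

Lemma pad_weighted_le_Pmax (s t : seq (R * d.-tuple R)) z i :
  {in s, forall x, 0 <= x.1} -> \sum_(x <- s) x.1 = 1 ->
  B [tuple \sum_(x <- s) x.1 * tnth (f x.2) j | j < k] ->
  perm_eq t s -> (size s <= k.+1)%N -> (0 < i <= k.+1)%N ->
  {in take i (pad_weighted t z), forall x, C x.2} ->
  {in drop i (pad_weighted t z), forall x, (A `\` C) x.2} ->
  \sum_(x <- take i (pad_weighted t z)) x.1 <= Pmax.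
Proof.
move=> s0 s1 sB ts sk iK tC tAC; apply: (le_Pmax iK); case/andP: iK => _ ik.
have sum_pad (F : R * d.-tuple R -> R) : F (0, z) = 0 ->
    \sum_(x <- pad_weighted t z) F x = \sum_(x <- s) F x.
  move=> F0; rewrite big_cat /= [X in _ + X]big1_seq ?addr0 ?(perm_big _ ts) //.
  by move=> x /andP[_ /nseqP[-> _]].
apply: Pi_values_of_seq => //.
- by rewrite size_cat size_nseq (perm_size ts) subnKC.
- by move=> x; rewrite mem_cat (perm_mem ts) => /orP[/s0 //|/nseqP[-> _] //].
- by rewrite sum_pad.
- by move: sB; congr B; apply: eq_mktuple => j; rewrite sum_pad ?mul0r.
Qed.

(* List the points of [s] in [C] first and pad with zero weights; when
   [A `\` C] is empty, every point lies in [C] and [P_(k+1)] is used. *)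
Lemma C_mass_le_Pmax (s : seq (R * d.-tuple R)) :
  {in s, forall x, 0 <= x.1 /\ A x.2} -> (size s <= k.+1)%N ->
  \sum_(x <- s) x.1 = 1 -> B [tuple \sum_(x <- s) x.1 * tnth (f x.2) j | j < k] ->
  \sum_(x <- s) x.1 * \1_C x.2 <= Pmax.
Proof.
move=> s0 sk s1 sB; have s0' : {in s, forall x, 0 <= x.1} by move=> x /s0[].
pose cs := [seq x <- s | x.2 \in C].
have -> : \sum_(x <- s) x.1 * \1_C x.2 = \sum_(x <- cs) x.1.
  rewrite big_filter [RHS]big_mkcond; apply: eq_bigr => x _.
  by rewrite indicE; case: (x.2 \in C); rewrite ?mulr1 ?mulr0.
have [->|cs0] := eqVneq cs [::]; first by rewrite big_nil Pmax_ge0.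
have cs_size : (0 < size cs <= k.+1)%N.
  by rewrite lt0n size_eq0 cs0 (leq_trans _ sk) // size_filter count_size.
have [[z [Az nCz]]|noAC] := pselect (exists z, (A `\` C) z).
  pose ncs := [seq x <- s | predC (fun x => x.2 \in C) x].
  have perm : perm_eq (cs ++ ncs) s by rewrite perm_filterC.
  have := pad_weighted_le_Pmax (z := z) s0' s1 sB perm sk cs_size.
  rewrite /pad_weighted -catA take_size_cat // drop_size_cat //; apply.
  - by move=> x; rewrite mem_filter => /andP[/set_mem].
  - move=> x; rewrite mem_cat => /orP[|/nseqP[-> _] //].
    by rewrite mem_filter => /andP[/negP xC /s0[_ Ax]]; split => // /mem_set.
have [x1 x1cs] : exists x1, x1 \in cs.
  by case: (cs) cs0 => // x1 ? _; exists x1; rewrite mem_head.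
have := pad_weighted_le_Pmax (z := x1.2) (i := k.+1) s0' s1 sB (perm_refl s) sk.
rewrite /pad_weighted take_oversize ?drop_oversize ?size_cat ?size_nseq ?subnKC //.
rewrite big_cat /= [X in _ + X]big1_seq ?addr0 ?s1; last first.
  by move=> x /andP[_ /nseqP[-> _]].
move=> le1Pmax; apply: le_trans (le1Pmax _ _ _) => //.
- rewrite -s1 big_filter [leRHS](bigID (fun x => x.2 \in C)) /= lerDl.
  by rewrite big_seq_cond sumr_ge0 // => x /andP[/s0'].
- move=> x; rewrite mem_cat => /orP[/s0[_ Ax]|/nseqP[-> _]].
    by apply: contrapT => nCx; apply: noAC; exists x.2.
  by move: x1cs; rewrite mem_filter => /andP[/set_mem].
Qed.

Lemma prob_values_le_Pmax p : prob_values A C B f p -> p <= Pmax.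
Proof.
move=> [dd [Om [P [X [mX PA iX BX ->]]]]].
set D := X @^-1` A.
have mD : measurable D by rewrite -[D]setTI; exact: mX.
have mXC : measurable (X @^-1` C) by rewrite -[X @^-1` C]setTI; exact: mX.
pose g w (i : 'I_k.+1) : R :=
  if unlift ord0 i is Some j then tnth (f (X w)) j else \1_(X @^-1` C) w.
have g0 w : g w ord0 = \1_(X @^-1` C) w by rewrite /g unlift_none.
have gS w j : g w (lift ord0 j) = tnth (f (X w)) j by rewrite /g liftK.
have gi i : P.-integrable D (EFin \o g^~ i).
  case: (unliftP ord0 i) => [j ->|->]; rewrite /g ?liftK ?unlift_none; first exact: iX.
  exact: integrableS measurableT mD _ (integrable_indic P mXC).
have [s [s0 s1 sg]] := mean_convex_combination mD PA gi.
have sgE i : \sum_(x <- s) x.1 * g x.2 i = meanv P D g i by rewrite -sg fct_sumE.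
pose sX := [seq (x.1, X x.2) | x <- s].
have [|s' [s'0 s'k s'1 s'f s'C]] :=
  caratheodory_reduction (fun y j => tnth (f y) j) \1_C (s := sX).
  by move=> _ /mapP[x /s0[x0 _] ->].
have -> : fine (P (X @^-1` C)) = \sum_(x <- sX) x.1 * \1_C x.2.
  have := sgE ord0; under eq_bigr do rewrite g0.
  rewrite /meanv (eq_Rintegral _ (fun w _ => g0 w)) /Rintegral integral_indic //.
  by rewrite setIidl ?big_map // => w /CA.
apply: le_trans s'C _; apply: C_mass_le_Pmax => //.
- by move=> x /s'0[x0 /mapP[_ /mapP[w /s0[_ Dw] ->] ->]].
- by rewrite s'1 big_map.
- move: BX; congr B; apply: eq_mktuple => j; rewrite s'f big_map /=.
  under [RHS]eq_bigr do rewrite -gS.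
  by rewrite sgE; apply: eq_Rintegral => w _; rewrite gS.
Qed.

Lemma sup_prob_values_le_Pmax : sup (prob_values A C B f) <= Pmax.
Proof.
case: (eqVneq (prob_values A C B f) set0) => [->|/set0P ne].
  by rewrite sup0 Pmax_ge0.
by apply: ge_sup ne _ => p; exact: prob_values_le_Pmax.
Qed.

Lemma Pval_le_sup_prob_values i : Pval A C B f i <= sup (prob_values A C B f).
Proof.
apply: le_sup_ge0; first exact: Pi_values_sub_prob_values.
  exact/has_ubound01/prob_values_in01.
by move=> p /prob_values_in01 /andP[].
Qed.

End SupremumAsMaximum.

Unset Implicit Arguments.
Theorem theorem5 (R : realType) (d k : nat) (hd : (0 < d)%N) (hk : (0 < k)%N)
  (A C : set (d.-tuple R)) (B : set (k.-tuple R))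
  (f : d.-tuple R -> k.-tuple R)
  (mA : measurable A) (mB : measurable B) (mf : measurable_fun A f)
  (mC : measurable C) (CA : C `<=` A) :
  sup (prob_values A C B f) =
  \big[Num.max/0]_(i < k.+1) Pval A C B f i.+1.
Proof.
apply/eqP; rewrite eq_le sup_prob_values_le_Pmax //=.
apply: bigmax_le => [|i _]; last exact: Pval_le_sup_prob_values.
apply: sup_ge0; first exact/has_ubound01/prob_values_in01.
by move=> p /prob_values_in01 /andP[].
Qed.
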